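(* Let $T,L$ be positive integers and $\epsilon\in(0,1)$. For $\rho=\{\rho_t^l\}\in[0,1]^{T\times L}$ let $F(\rho)=\sum_{t,l}\rho_t^l r_t^l b_t^l(\rho_t^l)$, $G(\rho)=1-\prod_{t=1}^T\prod_{l=1}^L\rho_t^l$, $H(\rho)=\sum_{t,l}(1-\rho_t^l)$. Let $\rho^\ast$ be an optimal solution of PA1: $\min F(\rho)$ s.t. $G(\rho)\le\epsilon$, $\rho\in[0,1]^{T\times L}$. Let $\tilde\lambda,\tilde\rho$ be optimal solutions of $\max_{\lambda\ge0}\min_{\rho\in[0,1]^{T\times L}}\{F(\rho)+\lambda[H(\rho)-\epsilon]\}$. Then $$0\le F(\tilde\rho)-F(\rho^\ast)\le\tilde\lambda\min\Big\{(TL-1)\epsilon,\ \frac{TL(TL-1)}{2}\epsilon^2\Big\}.$$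
   Context: For each $t\in\{1,\dots,T\}$, $l\in\{1,\dots,L\}$: $r_t^l$ is a positive integer and $b_t^l:[0,1]\to[0,b^l_{\max}]$ is strictly increasing and convex. $\rho_t^l$ is the probability of the event of successfully recruiting $r_t^l$ participants at time $t$, location $l$, and these events are independent. PA2 denotes $\min F(\rho)$ s.t. $H(\rho)\le\epsilon$, $\rho\in[0,1]^{T\times L}$; $F(\tilde\rho)$ is its optimal value. *)

From mathcomp Require Import all_boot all_order all_algebra.
Set Implicit Arguments. Unset Strict Implicit. Unset Printing Implicit Defensive.
Import Order.TTheory GRing.Theory Num.Theory.
Local Open Scope ring_scope.

Definition in_box (R : realFieldType) (T L : nat) (rho : 'I_T -> 'I_L -> R) :=
  forall t l, 0 <= rho t l <= 1.

Definition Fobj (R : realFieldType) (T L : nat) (r : 'I_T -> 'I_L -> nat)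
  (b : 'I_T -> 'I_L -> R -> R) (rho : 'I_T -> 'I_L -> R) : R :=
  \sum_(t < T) \sum_(l < L) rho t l * (r t l)%:R * b t l (rho t l).

Definition Gcon (R : realFieldType) (T L : nat) (rho : 'I_T -> 'I_L -> R) : R :=
  1 - \prod_(t < T) \prod_(l < L) rho t l.

Definition Hcon (R : realFieldType) (T L : nat) (rho : 'I_T -> 'I_L -> R) : R :=
  \sum_(t < T) \sum_(l < L) (1 - rho t l).

Definition Lag (R : realFieldType) (T L : nat) (r : 'I_T -> 'I_L -> nat)
  (b : 'I_T -> 'I_L -> R -> R) (eps lam : R) (rho : 'I_T -> 'I_L -> R) : R :=
  Fobj r b rho + lam * (Hcon rho - eps).

Definition strictly_increasing01 (R : realFieldType) (f : R -> R) :=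
  forall x y, 0 <= x -> x < y -> y <= 1 -> f x < f y.

Definition convex01 (R : realFieldType) (f : R -> R) :=
  forall x y a, 0 <= x <= 1 -> 0 <= y <= 1 -> 0 <= a <= 1 ->
    f (a * x + (1 - a) * y) <= a * f x + (1 - a) * f y.

From mathcomp Require Import all_boot all_order all_algebra.
From mathcomp Require Import ring lra.
Set Implicit Arguments. Unset Strict Implicit. Unset Printing Implicit Defensive.
Import Order.TTheory GRing.Theory Num.Theory.
Local Open Scope ring_scope.

(** The relaxed problem PA2 is tight: its optimum [rho_t] has [H = eps],
    since otherwise lowering one coordinate would stay feasible and strictly
    decrease [F].  Evaluating at the PA1 optimum [rho_s] the Lagrangian that
    [rho_t] minimises gives [F(rho_t) - F(rho_s) <= lam (H(rho_s) - eps)].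
    As [rho_s] lies in the box with [G(rho_s) <= eps], each deficit
    [1 - rho_s] is at most [eps], so [H(rho_s) <= TL eps]; and the
    second-order Bonferroni inequality [H - G <= TL(TL-1)/2 eps^2] bounds
    [H(rho_s) - eps] as well.  The lower bound holds because the union bound
    [G <= H] makes [rho_t] feasible for PA1. *)

Section UnitIntervalProducts.
Variables (R : realFieldType) (I : Type) (f : I -> R).
Hypothesis f01 : forall i, 0 <= f i <= 1.

Lemma prodr_itv01 (s : seq I) : 0 <= \prod_(i <- s) f i <= 1.
Proof.
by rewrite prodr_ge0 ?prodr_ile1 // => i _; case/andP: (f01 i).
Qed.

Lemma subr1_prod_le_sum (s : seq I) :
  1 - \prod_(i <- s) f i <= \sum_(i <- s) (1 - f i).
Proof.
elim: s => [|a s IH]; first by rewrite !big_nil subrr.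
rewrite !big_cons; have /andP[P0 P1] := prodr_itv01 s.
have /andP[fa0 fa1] := f01 a; nra.
Qed.

Lemma sum_le_size_mul (s : seq I) (m : R) : (forall i, 1 - f i <= m) ->
  \sum_(i <- s) (1 - f i) <= (size s)%:R * m.
Proof.
move=> hm; apply: (@le_trans _ _ (\sum_(i <- s) m)); first exact: ler_sum.
by rewrite big_const_seq count_predT iter_addr_0 mulr_natl.
Qed.

Lemma bonferroni2 (s : seq I) (m : R) : 0 <= m -> (forall i, 1 - f i <= m) ->
  2 * (\sum_(i <- s) (1 - f i) - (1 - \prod_(i <- s) f i)) <=
  (size s)%:R * ((size s)%:R - 1) * m ^+ 2.
Proof.
move=> m0 hm; elim: s => [|a s IH].
  by rewrite !big_nil subrr subr0 mulr0 !mul0r.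
have union := subr1_prod_le_sum s; have sum_le := sum_le_size_mul s hm.
rewrite !big_cons /= -addn1 natrD.
have /andP[P0 P1] := prodr_itv01 s; have /andP[fa0 fa1] := f01 a.
have hma := hm a.
set S := \sum_(i <- s) _ in IH union sum_le *.
set P := \prod_(i <- s) _ in IH union P0 P1 *.
set n := (size s)%:R in IH sum_le *.
have cross : (1 - f a) * (1 - P) <= m * (n * m).
  apply: (@le_trans _ _ (m * (1 - P))); first by nra.
  by apply: ler_wpM2l => //; lra.
rewrite expr2 in IH *; nra.
Qed.

End UnitIntervalProducts.

Lemma prod_le_factor (R : realFieldType) (I : finType) (f : I -> R) (i0 : I) :
  (forall i, 0 <= f i <= 1) -> \prod_i f i <= f i0.
Proof.
move=> f01; rewrite (bigD1 i0) //= -big_filter.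
have /andP[P0 P1] := prodr_itv01 f01 [seq i <- index_enum I | i != i0].
have /andP[fi0 _] := f01 i0; nra.
Qed.

Lemma sum_update (R : realFieldType) (I : finType) (f g : I -> R) (i0 : I) :
  (forall i, i != i0 -> g i = f i) ->
  \sum_i g i = \sum_i f i + (g i0 - f i0).
Proof.
move=> gf; rewrite [LHS](bigD1 i0) // [in RHS](bigD1 i0) //=.
rewrite (eq_bigr f) => [|i /gf //]; lra.
Qed.

Section TwoIndexProblem.
Variables (R : realFieldType) (T L : nat).
Implicit Types rho : 'I_T -> 'I_L -> R.

Lemma box_pair rho : in_box rho -> forall p : 'I_T * 'I_L, 0 <= rho p.1 p.2 <= 1.
Proof. by move=> box p; apply: box. Qed.

Lemma card_index_pairs : size (index_enum ('I_T * 'I_L)%type) = (T * L)%N.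
Proof. by rewrite -sum1_size sum1_card card_prod !card_ord. Qed.

Lemma Gcon_le_Hcon rho : in_box rho -> Gcon rho <= Hcon rho.
Proof.
by move=> box; rewrite /Gcon /Hcon !pair_bigA subr1_prod_le_sum // box_pair.
Qed.

Lemma deficit_le_Gcon rho t l : in_box rho -> 1 - rho t l <= Gcon rho.
Proof.
move=> box; rewrite /Gcon pair_bigA lerD2l lerN2.
exact: (prod_le_factor (t, l) (box_pair box)).
Qed.

Lemma Hcon_sub_eps_le rho (eps : R) : 0 <= eps ->
  in_box rho -> Gcon rho <= eps ->
  Hcon rho - eps <= Num.min (((T * L)%:R - 1) * eps)
                            (((T * L)%:R * ((T * L)%:R - 1) / 2) * eps ^+ 2).
Proof.
move=> eps0 box G_eps.
have deficit_eps p : 1 - rho p.1 p.2 <= eps.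
  exact: le_trans (deficit_le_Gcon p.1 p.2 box) G_eps.
have HG := bonferroni2 (box_pair box) (index_enum _) eps0 deficit_eps.
have H_le := sum_le_size_mul (index_enum _) deficit_eps.
move: G_eps; rewrite /Gcon /Hcon !pair_bigA card_index_pairs in HG H_le *.
set N := (T * L)%:R in HG H_le *; move=> G_eps.
rewrite le_min; apply/andP; split; first lra.
have -> : N * (N - 1) / 2 * eps ^+ 2 = N * (N - 1) * eps ^+ 2 / 2 by ring.
lra.
Qed.

Definition update rho t0 l0 (x : R) : 'I_T -> 'I_L -> R :=
  fun t l => if (t == t0) && (l == l0) then x else rho t l.

Lemma sum2_update (phi : 'I_T -> 'I_L -> R -> R) rho t0 l0 x :
  \sum_(t < T) \sum_(l < L) phi t l (update rho t0 l0 x t l) =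
  \sum_(t < T) \sum_(l < L) phi t l (rho t l) + (phi t0 l0 x - phi t0 l0 (rho t0 l0)).
Proof.
rewrite !pair_bigA (@sum_update _ _ (fun p => phi p.1 p.2 (rho p.1 p.2)) _ (t0, l0))
  /update /= ?eqxx //.
by case=> t l; rewrite xpair_eqE /= => /negbTE ->.
Qed.

Variables (r : 'I_T -> 'I_L -> nat) (b : 'I_T -> 'I_L -> R -> R).
Hypothesis r_gt0 : forall t l, (0 < r t l)%N.
Hypothesis b_ge0 : forall t l x, 0 <= x <= 1 -> 0 <= b t l x.
Hypothesis b_inc : forall t l, strictly_increasing01 (b t l).

Lemma cost_lt t l x y : 0 <= x -> x < y -> y <= 1 ->
  x * (r t l)%:R * b t l x < y * (r t l)%:R * b t l y.
Proof.
move=> x0 xy y1.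
have bxy := b_inc t l x0 xy y1.
have bx0 : 0 <= b t l x by apply: b_ge0; apply/andP; split; lra.
have r0 : 0 < (r t l)%:R :> R by rewrite ltr0n.
have xb_lt : x * b t l x < y * b t l y by nra.
by rewrite -!mulrA ![(r t l)%:R * _]mulrC !mulrA ltr_pM2r.
Qed.

Lemma Hcon_PA2_opt_eq rho (eps : R) : (0 < T)%N -> (0 < L)%N -> eps < 1 ->
  in_box rho -> Hcon rho <= eps ->
  (forall rho', in_box rho' -> Hcon rho' <= eps -> Fobj r b rho <= Fobj r b rho') ->
  Hcon rho = eps.
Proof.
move=> T0 L0 eps1 box H_eps opt; apply/eqP; rewrite eq_le H_eps leNgt /=.
apply/negP => H_lt.
pose t0 := Ordinal T0; pose l0 := Ordinal L0.
have /andP[r00 r01] := box t0 l0; set r0 := rho t0 l0 in r00 r01 *.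
have r0_gt0 : 0 < r0.
  have Hcon_ge : 1 - r0 <= Hcon rho.
    rewrite /Hcon pair_bigA (bigD1 (t0, l0)) //= lerDl.
    by apply: sumr_ge0 => p _; case/andP: (box p.1 p.2) => _; rewrite subr_ge0.
  lra.
pose d := Num.min (eps - Hcon rho) r0.
have d_gt0 : 0 < d by rewrite lt_min subr_gt0 H_lt r0_gt0.
have d_slack : d <= eps - Hcon rho by rewrite ge_min lexx.
have d_r0 : d <= r0 by rewrite ge_min lexx orbT.
clearbody d.
pose rho' := update rho t0 l0 (r0 - d).
have box' : in_box rho'.
  move=> t l; rewrite /rho' /update; case: ifP => _; last exact: box.
  by apply/andP; split; lra.
have H' : Hcon rho' <= eps.
  rewrite /Hcon /rho' (sum2_update (fun _ _ y => 1 - y)) -/(Hcon rho) -/r0; lra.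
have := opt rho' box' H'.
rewrite /Fobj /rho' (sum2_update (fun t l y => y * (r t l)%:R * b t l y)).
rewrite -/(Fobj r b rho) -/r0.
have := cost_lt t0 l0 (x := r0 - d) (y := r0); lra.
Qed.

End TwoIndexProblem.

Theorem theorem3 (R : realFieldType) (T L : nat) (hT : (0 < T)%N) (hL : (0 < L)%N)
  (eps : R) (heps : 0 < eps < 1)
  (r : 'I_T -> 'I_L -> nat) (hr : forall t l, (0 < r t l)%N)
  (b : 'I_T -> 'I_L -> R -> R) (bmax : 'I_L -> R)
  (hb_range : forall t l x, 0 <= x <= 1 -> 0 <= b t l x <= bmax l)
  (hb_inc : forall t l, strictly_increasing01 (b t l))
  (hb_cvx : forall t l, convex01 (b t l))
  (* rho_star : optimal solution of PA1 *)
  (rho_star : 'I_T -> 'I_L -> R)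
  (hstar_box : in_box rho_star) (hstar_G : Gcon rho_star <= eps)
  (hstar_opt : forall rho, in_box rho -> Gcon rho <= eps ->
                 Fobj r b rho_star <= Fobj r b rho)
  (* (lam_t, rho_t) : optimal solutions of max_{lam>=0} min_{rho in box} Lag *)
  (lam_t : R) (rho_t : 'I_T -> 'I_L -> R)
  (hlam : 0 <= lam_t) (ht_box : in_box rho_t)
  (ht_min : forall rho, in_box rho -> Lag r b eps lam_t rho_t <= Lag r b eps lam_t rho)
  (ht_max : forall lam, 0 <= lam -> exists2 rho, in_box rho &
               Lag r b eps lam rho <= Lag r b eps lam_t rho_t)
  (* context: rho_t solves PA2 and F(rho_t) is its optimal value *)
  (ht_H : Hcon rho_t <= eps)
  (ht_opt2 : forall rho, in_box rho -> Hcon rho <= eps ->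
               Fobj r b rho_t <= Fobj r b rho) :
  0 <= Fobj r b rho_t - Fobj r b rho_star /\
  Fobj r b rho_t - Fobj r b rho_star <=
    lam_t * Num.min (((T * L)%:R - 1) * eps)
                    (((T * L)%:R * ((T * L)%:R - 1) / 2) * eps ^+ 2).
Proof.
case/andP: heps => eps0 eps1.
have b_ge0 t l x (x01 : 0 <= x <= 1) : 0 <= b t l x.
  by case/andP: (hb_range t l x x01).
have PA1_feasible : Gcon rho_t <= eps := le_trans (Gcon_le_Hcon ht_box) ht_H.
have := hstar_opt rho_t ht_box PA1_feasible.
have tight : Hcon rho_t = eps.
  exact: (Hcon_PA2_opt_eq hr b_ge0 hb_inc hT hL eps1 ht_box ht_H ht_opt2).
have := ht_min rho_star hstar_box; rewrite /Lag tight subrr mulr0 addr0.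
have := Hcon_sub_eps_le (ltW eps0) hstar_box hstar_G.
set m := Num.min _ _ => H_le gap_le F_le; split; first lra.
apply: le_trans (_ : lam_t * (Hcon rho_star - eps) <= _); first lra.
exact: ler_wpM2l.
Qed.
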